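(* Let $G=G_{\mathbf E}$ be a multi-GGS group which is not the constant GGS group. Then every element of $N(B)$ fixes the vertex $0$, and $$N(B)|_0\subseteq N(B),\qquad C(B)|_0\subseteq C(B),$$ where $N(B),C(B)$ are the normaliser and centraliser of $B$ in $\mathrm{Aut}(X^* )$ and $S|_0=\{g|_0\mid g\in S\}$.
   Context: Let $p$ be an odd prime and $X=\{0,1,\dots,p-1\}$, identified with $\mathbb F_p$. $X^*$ is the $p$-regular rooted tree of finite words over $X$; $\mathrm{Aut}(X^* )$ acts on the right. Sections $g|_v$ are defined by $(vw)^g=v^g\,w^{g|_v}$. $\mathrm{Stab}(1)$ is the stabiliser of all one-letter words and $\psi_1\colon\mathrm{Stab}(1)\to\mathrm{Aut}(X^* )^p$, $g\mapsto(g|_0,\dots,g|_{p-1})$, is an isomorphism. Let $a$ be the rooted automorphism acting as $\sigma=(0\,1\,\cdots\,p-1)$ on the first letter and trivially on the remaining letters. Let $\mathbf E\le\mathbb F_p^{p-1}$ be a subspace of dimension $r\ge1$; $E$ is the $r\times(p-1)$ matrix whose rows form a fixed basis of $\mathbf E$, with columns $\mathbf e_1,\dots,\mathbf e_{p-1}$. For $\mathbf n\in\mathbb F_p^r$, $b^{\mathbf n}\in\mathrm{Stab}(1)$ is the unique automorphism with $\psi_1(b^{\mathbf n})=(b^{\mathbf n},a^{\mathbf n\cdot\mathbf e_1},\dots,a^{\mathbf n\cdot\mathbf e_{p-1}})$; $B=\{b^{\mathbf n}\mid\mathbf n\in\mathbb F_p^r\}$. $G_{\mathbf E}$ is generated by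 $a$ and $B$; it is the constant GGS group if $\mathbf E=\{(\lambda,\dots,\lambda)\mid\lambda\in\mathbb F_p\}$. *)

From HB Require Import structures.
From mathcomp Require Import all_boot all_order all_algebra.
Set Implicit Arguments. Unset Strict Implicit. Unset Printing Implicit Defensive.
Import GRing.Theory.
Local Open Scope ring_scope.

Definition word (p : nat) := seq 'F_p.

(* A tree automorphism acting on the right: w^g is written (g w). *)
Definition is_aut (p : nat) (g : word p -> word p) : Prop :=
  [/\ (forall w, size (g w) = size w),
      (forall v w, take (size v) (g (v ++ w)) = g v)
    & bijective g].

(* Section g|_v : (v w)^g = v^g w^{g|_v}. *)
Definition section (p : nat) (g : word p -> word p) (v : word p) : word p -> word p :=
  fun w => drop (size v) (g (v ++ w)).

Definition a_pow (p : nat) (k : 'F_p) (w : word p) : word p :=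
  match w with [::] => [::] | y :: w' => (y + k) :: w' end.

(* n . e_x for a letter x <> 0 (column e_x is column x-1 of E) *)
Definition exponent (p r : nat) (E : 'M['F_p]_(r, p.-1)) (n : 'rV['F_p]_r)
  (x : 'F_p) : 'F_p :=
  match insub (nat_of_ord x).-1 : option 'I_(p.-1) with
  | Some j => (n *m E) 0 j
  | None => 0
  end.

(* b^n : psi_1(b^n) = (b^n, a^{n.e_1}, ..., a^{n.e_{p-1}}) *)
Fixpoint b_act (p r : nat) (E : 'M['F_p]_(r, p.-1)) (n : 'rV['F_p]_r)
  (w : word p) : word p :=
  match w with
  | [::] => [::]
  | x :: w' => if x == 0 then x :: b_act E n w' else x :: a_pow (exponent E n x) w'
  end.

(* Normaliser of B = {b^n} in Aut(X^* ):  B^g = B  (g^{-1} b^n g = b^m,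
   i.e. b^n then g equals g then b^m, as functions on words) *)
Definition in_normaliser (p r : nat) (E : 'M['F_p]_(r, p.-1))
  (g : word p -> word p) : Prop :=
  is_aut g /\
  (forall n, exists m, forall w, b_act E m (g w) = g (b_act E n w)) /\
  (forall m, exists n, forall w, b_act E m (g w) = g (b_act E n w)).

Definition in_centraliser (p r : nat) (E : 'M['F_p]_(r, p.-1))
  (g : word p -> word p) : Prop :=
  is_aut g /\ (forall n w, b_act E n (g w) = g (b_act E n w)).

(* the constant GGS subspace {(l,...,l)} *)
Definition constant_space (p : nat) : 'M['F_p]_(1, p.-1) := const_mx 1.

From mathcomp Require Import all_boot all_order all_algebra.
Local Open Scope ring_scope.
Import GRing.Theory.

Set Implicit Arguments.
Unset Strict Implicit.
Unset Printing Implicit Defensive.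

(* If g normalises B, choose n and a letter x <> 0 with n.e_x <> 0, so that b^n
   changes only the third letter of 0x0.  Were g[0] = c <> 0, then on the subtree
   below c the conjugate b^m acts as the rooted automorphism a^(m.e_c), which never
   touches the third letter; hence g would send 0x0 and 0x(n.e_x) to the same word,
   contradicting injectivity.  Once g fixes 0, its section g|_0 is an automorphism,
   and since b^n|_0 = b^n, restricting g^-1 b^n g = b^m to the subtree of 0 gives
   the same relation for g|_0. *)

Section TreeAutomorphism.
Variables (p : nat) (g : word p -> word p).
Hypothesis g_aut : is_aut g.

Lemma aut_size w : size (g w) = size w.
Proof. by case: g_aut. Qed.

Lemma aut_take v w : take (size v) (g (v ++ w)) = g v.
Proof. by case: g_aut. Qed.

Lemma aut_inj : injective g.
Proof. by case: g_aut => _ _ /bij_inj. Qed.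

Lemma aut_cat_section v w : g (v ++ w) = g v ++ section g v w.
Proof. by rewrite -{1}(cat_take_drop (size v) (g (v ++ w))) aut_take. Qed.

Lemma aut_takeE n u : take n (g u) = g (take n u).
Proof.
have [le_nu | lt_un] := leqP n (size u).
  by rewrite -{1}(cat_take_drop n u) -{1}(size_takel le_nu) aut_take.
by rewrite !take_oversize ?aut_size // ltnW.
Qed.

Lemma aut_rcons v y : exists t, g (rcons v y) = rcons (g v) t.
Proof.
have := aut_size (v ++ [:: y]).
rewrite -cats1 aut_cat_section !size_cat aut_size => /addnI.
by case: (section g v [:: y]) => [|t [|]] //= _; exists t; rewrite cats1.
Qed.

Section FixedVertex.
Variable v : word p.
Hypothesis gv : g v = v.

Lemma aut_fixed_cat w : g (v ++ w) = v ++ section g v w.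
Proof. by rewrite aut_cat_section gv. Qed.

Lemma section_is_aut : is_aut (section g v).
Proof.
have [_ _ [gi gK giK]] := g_aut.
have gi_cat x : gi (v ++ x) = v ++ drop (size v) (gi (v ++ x)).
  have gi_prefix : take (size v) (gi (v ++ x)) = v.
    by apply: aut_inj; rewrite -aut_takeE giK take_size_cat // gv.
  by rewrite -{1}(cat_take_drop (size v) (gi (v ++ x))) gi_prefix.
split.
- by move=> w; rewrite size_drop aut_size size_cat addKn.
- move=> u w; rewrite /section take_drop addnC -size_cat aut_takeE.
  by rewrite catA take_size_cat.
- exists (fun x => drop (size v) (gi (v ++ x))) => w.
    by rewrite -aut_fixed_cat gK drop_size_cat.
  by rewrite /section -gi_cat giK drop_size_cat.
Qed.

Lemma section_commute (h k h' k' : word p -> word p) :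
  (forall w, h (v ++ w) = v ++ h' w) -> (forall w, k (v ++ w) = v ++ k' w) ->
  (forall u, k (g u) = g (h u)) ->
  forall w, k' (section g v w) = section g v (h' w).
Proof.
move=> hv kv kgh w.
have : v ++ k' (section g v w) = v ++ section g v (h' w).
  by rewrite -kv -!aut_fixed_cat kgh hv.
by move/(congr1 (drop (size v))); rewrite !drop_size_cat.
Qed.

End FixedVertex.

End TreeAutomorphism.

Section GeneratorsB.
Variables (p r : nat) (E : 'M['F_p]_(r, p.-1)).

Lemma b_act_cons0 n w : b_act E n (0 :: w) = 0 :: b_act E n w.
Proof. by []. Qed.

Lemma b_act_cons_neq0 n x y w : x != 0 ->
  b_act E n [:: x, y & w] = [:: x, y + exponent E n x & w].
Proof. by move=> /negPf /= ->. Qed.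

Lemma exponent_inord n (j : 'I_p.-1) : prime p ->
  exponent E n (inord j.+1) = (n *m E) 0 j.
Proof.
by move=> p_pr; rewrite /exponent inordK /= ?valK // Fp_cast // -ltn_predRL.
Qed.

Lemma exists_exponent_neq0 : prime p -> E != 0 ->
  exists n x, x != 0 /\ exponent E n x != 0.
Proof.
move=> p_pr E_neq0.
have /existsP[[i j] /= Eij] : [exists ij : 'I_r * 'I_p.-1, E ij.1 ij.2 != 0].
  apply: contraR E_neq0; rewrite negb_exists => /forallP E0.
  by apply/eqP/matrixP => i j; rewrite mxE; apply/eqP/negPn/(E0 (i, j)).
exists (delta_mx 0 i), (inord j.+1); split.
  by rewrite -(inj_eq val_inj) /= inordK // Fp_cast // -ltn_predRL.
by rewrite exponent_inord // -rowE mxE.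
Qed.

Lemma normalising_fixes0 (g : word p -> word p) n x :
  is_aut g -> x != 0 -> exponent E n x != 0 ->
  (exists m, forall w, b_act E m (g w) = g (b_act E n w)) -> g [:: 0] = [:: 0].
Proof.
move=> g_aut x_neq0 e_neq0 [m gbm].
have [c g0] : exists c, g [:: 0] = [:: c].
  have [c ->] := aut_rcons g_aut [::] 0; exists c.
  by rewrite (size0nil (aut_size g_aut [::])).
have [c0 | c_neq0] := eqVneq c 0; first by rewrite g0 c0.
pose e := exponent E n x.
have [s g0x] := aut_rcons g_aut [:: 0] x; rewrite g0 /= in g0x.
have [t0 g0x0] := aut_rcons g_aut [:: 0; x] 0.
have [te g0xe] := aut_rcons g_aut [:: 0; x] e.
rewrite g0x /= in g0x0 g0xe.
have b_w0 : b_act E n [:: 0; x; 0] = [:: 0; x; e].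
  by rewrite b_act_cons0 b_act_cons_neq0 // add0r.
have [_ t0_te] : [:: c; s + exponent E m c; t0] = [:: c; s; te].
  by rewrite -b_act_cons_neq0 // -g0x0 gbm b_w0.
have [/esym e0] : [:: 0; x; 0] = [:: 0; x; e].
  by apply: (aut_inj g_aut); rewrite g0x0 g0xe t0_te.
by move: e_neq0; rewrite -/e e0 eqxx.
Qed.

Lemma centraliser_sub_normaliser g : in_centraliser E g -> in_normaliser E g.
Proof. by case=> g_aut gb; split; last by split=> n; exists n. Qed.

Section NonzeroE.
Hypotheses (p_pr : prime p) (E_neq0 : E != 0).

Lemma normaliser_fix0 g : in_normaliser E g -> g [:: 0] = [:: 0].
Proof.
case=> g_aut [gB _]; have [n [x [x_neq0 e_neq0]]] := exists_exponent_neq0 p_pr E_neq0.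
exact: normalising_fixes0 g_aut x_neq0 e_neq0 (gB n).
Qed.

Lemma section0_commute_b g n m : in_normaliser E g ->
  (forall w, b_act E m (g w) = g (b_act E n w)) ->
  forall w, b_act E m (section g [:: 0] w) = section g [:: 0] (b_act E n w).
Proof.
move=> gN gbm; have [g_aut _] := gN.
exact: (section_commute g_aut (normaliser_fix0 gN) (h := b_act E n) (k := b_act E m)
  (b_act_cons0 n) (b_act_cons0 m) gbm).
Qed.

Lemma normaliser_section0 g : in_normaliser E g -> in_normaliser E (section g [:: 0]).
Proof.
move=> gN; have [g_aut [gB Bg]] := gN.
split; first exact: (section_is_aut g_aut (normaliser_fix0 gN)).
split=> [n | m].
  by have [m gbm] := gB n; exists m; exact: section0_commute_b gN gbm.
by have [n gbm] := Bg m; exists n; exact: section0_commute_b gN gbm.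
Qed.

Lemma centraliser_section0 g : in_centraliser E g -> in_centraliser E (section g [:: 0]).
Proof.
move=> gC; have gN := centraliser_sub_normaliser gC; have [g_aut gb] := gC.
split; first exact: (section_is_aut g_aut (normaliser_fix0 gN)).
by move=> n; exact: section0_commute_b gN (gb n).
Qed.

End NonzeroE.

End GeneratorsB.

Theorem mainTheorem6 (p r : nat) (E : 'M['F_p]_(r, p.-1)) :
  prime p -> odd p -> (0 < r)%N -> row_free E ->
  ~~ (E == constant_space p)%MS ->
  (forall g, in_normaliser E g -> g [:: 0] = [:: 0]) /\
  (forall g, in_normaliser E g -> in_normaliser E (section g [:: 0])) /\
  (forall g, in_centraliser E g -> in_centraliser E (section g [:: 0])).
Proof.
move=> p_pr _ r_gt0 E_free _.
have E_neq0 : E != 0.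
  by apply: contraTneq E_free => ->; rewrite /row_free mxrank0 eq_sym -lt0n.
split; first exact: normaliser_fix0.
by split; [exact: normaliser_section0 | exact: centraliser_section0].
Qed.
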